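(* Assume the setting of the context. Let $k\ge0$, $\bar w^k=(\bar x^k,\bar y^k)\in\mathcal{X}\times\mathbb{R}^m$, $\gamma_k,\beta_k>0$, $\tau_k\in(0,1)$, $c_k\in(-1,1]$, and set $\beta_{k+1}:=(1-\tau_k)\beta_k$, $\gamma_{k+1}:=(1-c_k\tau_k)\gamma_k$. Define $$\hat y^k:=(1-\tau_k)\bar y^k+\tau_k\beta_k^{-1}(A\bar x^k-b),\quad \bar x^{k+1}:=(1-\tau_k)\bar x^k+\tau_kx^\star_{\gamma_{k+1}}(\hat y^k),\quad \bar y^{k+1}:=\hat y^k+\frac{\gamma_{k+1}}{\bar L^g}\big(Ax^\star_{\gamma_{k+1}}(\hat y^k)-b\big).$$ If $\tau_k$ is chosen such that $\beta_{k+1}\gamma_{k+1}\ge\bar L^g\tau_k^2$, then $(\bar x^{k+1},\bar y^{k+1})\in\mathcal{X}\times\mathbb{R}^m$ and $$G_{\gamma_{k+1}\beta_{k+1}}(\bar x^{k+1},\bar y^{k+1})\le(1-\tau_k)G_{\gamma_k\beta_k}(\bar x^k,\bar y^k)-\psi_k,$$ where $\psi_k:=\tau_k(1-\tau_k)\gamma_k\big[d_b(Sx^\star_{\gamma_{k+1}}(\hat y^k),Sx_c)-c_k\,d_b(Sx^\star_{\gamma_{k+1}}(\bar y^k),Sx_c)\big]\ge0$.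
   Context: Problem: $f:\mathbb{R}^n\to\mathbb{R}\cup\{+\infty\}$ proper, closed, convex; $\mathcal{X}\subseteq\mathbb{R}^n$ nonempty, closed, convex; $A\in\mathbb{R}^{m\times n}$, $b\in\mathbb{R}^m$; $f^\star:=\min\{f(x):Ax=b,\ x\in\mathcal{X}\}$. Standing assumption: the solution set is nonempty and either $\mathcal{X}$ is a polytope or $\{x:Ax=b\}\cap\mathrm{relint}(\mathcal{X})\ne\emptyset$. Euclidean norms. Smoothing: $d_b(u,v):=p(u)-p(v)-\nabla p(v)^T(u-v)$ is the Bregman distance of a smooth strongly convex function $p$ (parameter $\sigma_d>0$); $S$ is a matrix with $n$ columns; $x_c\in\mathcal{X}$. For $\gamma>0$, $g_\gamma(y):=\min_{x\in\mathcal{X}}\{f(x)+y^T(Ax-b)+\gamma d_b(Sx,Sx_c)\}$ with minimizer $x^\star_\gamma(y)$. Standing smoothability assumption: there is a constant $\bar L^g>0$ such that for every $\gamma>0$, $g_\gamma$ is concave and differentiable with $\nabla g_\gamma(y)=Ax^\star_\gamma(y)-b$ Lipschitz continuous with constant $\bar L^g/\gamma$. Smoothed gap function: with $F(w):=(A^Ty,\ b-Ax)$ for $w=(x,y)$, $$G_{\gamma\beta}(\bar w):=\max_{w=(x,y)\in\mathcal{X}\times\mathbb{R}^m}\Big\{f(\bar x)-f(x)+F(\bar w)^T(\bar w-w)-\gamma d_b(Sx,Sx_c)-\tfrac{\beta}{2}\|y\|_2^2\Big\}.$$ *)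

From HB Require Import structures.
From mathcomp Require Import all_boot all_order all_algebra.
From mathcomp Require Import all_classical all_reals ereal.
Set Implicit Arguments. Unset Strict Implicit. Unset Printing Implicit Defensive.
Import Order.TTheory GRing.Theory Num.Theory.
Local Open Scope ring_scope.

Definition dotv {R : realType} {k : nat} (u v : 'cV[R]_k) : R :=
  \sum_(i < k) u i ord0 * v i ord0.
Definition norm2 {R : realType} {k : nat} (u : 'cV[R]_k) : R :=
  Num.sqrt (dotv u u).

Definition has_grad {R : realType} {k : nat} (h : 'cV[R]_k -> R)
  (v gv : 'cV[R]_k) : Prop :=
  forall eps : R, 0 < eps -> exists delta : R, 0 < delta /\
    forall u, norm2 (u - v) < delta ->
      `|h u - h v - dotv gv (u - v)| <= eps * norm2 (u - v).

Definition closed_set {R : realType} {k : nat} (X : 'cV[R]_k -> Prop) : Prop :=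
  forall x, (forall eps : R, 0 < eps -> exists y, X y /\ norm2 (y - x) < eps) -> X x.

Definition convex_set {R : realType} {k : nat} (X : 'cV[R]_k -> Prop) : Prop :=
  forall (x y : 'cV[R]_k) (t : R), X x -> X y -> 0 <= t <= 1 -> X (t *: x + (1 - t) *: y).

Definition proper_fun {R : realType} {k : nat} (f : 'cV[R]_k -> \bar R) : Prop :=
  (exists x, (f x < +oo)%E) /\ (forall x, (-oo < f x)%E).

Definition convex_fun {R : realType} {k : nat} (f : 'cV[R]_k -> \bar R) : Prop :=
  forall (x y : 'cV[R]_k) (t : R), 0 <= t <= 1 ->
    (f (t *: x + (1 - t) *: y)%R <= t%:E * f x + (1 - t)%:E * f y)%E.

(* closed function: its epigraph {(x,t) | f x <= t} is closed in R^k x R *)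
Definition closed_fun {R : realType} {k : nat} (f : 'cV[R]_k -> \bar R) : Prop :=
  forall x (t : R),
    (forall eps : R, 0 < eps -> exists y (s : R),
        (f y <= s%:E)%E /\ norm2 (y - x) < eps /\ `|s - t| < eps) ->
    (f x <= t%:E)%E.

Definition concave_fun {R : realType} {k : nat} (h : 'cV[R]_k -> R) : Prop :=
  forall (x y : 'cV[R]_k) (t : R), 0 <= t <= 1 ->
    t * h x + (1 - t) * h y <= h (t *: x + (1 - t) *: y).

Definition strongly_convex {R : realType} {k : nat} (p : 'cV[R]_k -> R) (sigma : R) : Prop :=
  forall (u v : 'cV[R]_k) (t : R), 0 <= t <= 1 ->
    p (t *: u + (1 - t) *: v) <=
      t * p u + (1 - t) * p v - sigma / 2 * t * (1 - t) * (norm2 (u - v)) ^+ 2.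

Definition bregman {R : realType} {k : nat} (p : 'cV[R]_k -> R) (gp : 'cV[R]_k -> 'cV[R]_k)
  (u v : 'cV[R]_k) : R :=
  p u - p v - dotv (gp v) (u - v).

Definition aff_hull {R : realType} {k : nat} (X : 'cV[R]_k -> Prop) (y : 'cV[R]_k) : Prop :=
  exists (N : nat) (pts : 'I_N -> 'cV[R]_k) (w : 'I_N -> R),
    (forall i, X (pts i)) /\ \sum_(i < N) w i = 1 /\ y = \sum_(i < N) w i *: pts i.

Definition relint {R : realType} {k : nat} (X : 'cV[R]_k -> Prop) (x : 'cV[R]_k) : Prop :=
  X x /\ exists eps : R, 0 < eps /\
    forall y, aff_hull X y -> norm2 (y - x) < eps -> X y.

Definition polytope {R : realType} {k : nat} (X : 'cV[R]_k -> Prop) : Prop :=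
  exists (N : nat) (pts : 'I_N -> 'cV[R]_k), forall x,
    X x <-> exists w : 'I_N -> R, (forall i, 0 <= w i) /\ \sum_(i < N) w i = 1 /\
                                  x = \sum_(i < N) w i *: pts i.

Definition primal_solution {R : realType} {n m : nat} (f : 'cV[R]_n -> \bar R)
  (X : 'cV[R]_n -> Prop) (A : 'M[R]_(m, n)) (b : 'cV[R]_m) (x : 'cV[R]_n) : Prop :=
  X x /\ A *m x = b /\ forall z, X z -> A *m z = b -> (f x <= f z)%E.

(* objective of the smoothed dual function g_gamma(y) at x *)
Definition smobj {R : realType} {n m q : nat} (f : 'cV[R]_n -> \bar R)
  (A : 'M[R]_(m, n)) (b : 'cV[R]_m) (p : 'cV[R]_q -> R) (gp : 'cV[R]_q -> 'cV[R]_q)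
  (S : 'M[R]_(q, n)) (xc : 'cV[R]_n) (gam : R) (y : 'cV[R]_m) (x : 'cV[R]_n) : \bar R :=
  (f x + (dotv y (A *m x - b) + gam * bregman p gp (S *m x) (S *m xc))%R%:E)%E.

Definition gsmooth {R : realType} {n m q : nat} (f : 'cV[R]_n -> \bar R)
  (X : 'cV[R]_n -> Prop) (A : 'M[R]_(m, n)) (b : 'cV[R]_m) (p : 'cV[R]_q -> R)
  (gp : 'cV[R]_q -> 'cV[R]_q) (S : 'M[R]_(q, n)) (xc : 'cV[R]_n) (gam : R)
  (y : 'cV[R]_m) : \bar R :=
  ereal_inf [set e | exists x, X x /\ e = smobj f A b p gp S xc gam y x].

Definition is_smoothed_minimizer {R : realType} {n m q : nat} (f : 'cV[R]_n -> \bar R)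
  (X : 'cV[R]_n -> Prop) (A : 'M[R]_(m, n)) (b : 'cV[R]_m) (p : 'cV[R]_q -> R)
  (gp : 'cV[R]_q -> 'cV[R]_q) (S : 'M[R]_(q, n)) (xc : 'cV[R]_n) (gam : R)
  (y : 'cV[R]_m) (xs : 'cV[R]_n) : Prop :=
  X xs /\ forall x, X x -> (smobj f A b p gp S xc gam y xs <= smobj f A b p gp S xc gam y x)%E.

Definition smoothable {R : realType} {n m q : nat} (f : 'cV[R]_n -> \bar R)
  (X : 'cV[R]_n -> Prop) (A : 'M[R]_(m, n)) (b : 'cV[R]_m) (p : 'cV[R]_q -> R)
  (gp : 'cV[R]_q -> 'cV[R]_q) (S : 'M[R]_(q, n)) (xc : 'cV[R]_n)
  (xstar : R -> 'cV[R]_m -> 'cV[R]_n) (Lg : R) : Prop :=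
  forall gam : R, 0 < gam ->
    let g := fun y => fine (gsmooth f X A b p gp S xc gam y) in
    (forall y, gsmooth f X A b p gp S xc gam y \is a fin_num) /\
    concave_fun g /\
    (forall y, has_grad g y (A *m xstar gam y - b)) /\
    (forall y1 y2, norm2 ((A *m xstar gam y1 - b) - (A *m xstar gam y2 - b))
                   <= Lg / gam * norm2 (y1 - y2)).

Definition gap {R : realType} {n m q : nat} (f : 'cV[R]_n -> \bar R)
  (X : 'cV[R]_n -> Prop) (A : 'M[R]_(m, n)) (b : 'cV[R]_m) (p : 'cV[R]_q -> R)
  (gp : 'cV[R]_q -> 'cV[R]_q) (S : 'M[R]_(q, n)) (xc : 'cV[R]_n) (gam bet : R)
  (xb : 'cV[R]_n) (yb : 'cV[R]_m) : \bar R :=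
  ereal_sup [set e | exists (x : 'cV[R]_n) (y : 'cV[R]_m), X x /\
     e = (f xb - f x
          + (dotv (A^T *m yb) (xb - x) + dotv (b - A *m xb) (yb - y)
             - gam * bregman p gp (S *m x) (S *m xc)
             - bet / 2 * (norm2 y) ^+ 2)%R%:E)%E].

(* The gap at (xb, yb) is at most f xb + |A xb - b|^2 / (2 bet) - g_gam(yb): Young's
   inequality bounds the y-part of the supremum and g_gam(yb) is a minimum over X.
   Conversely, the choice y = (A xb - b) / bet and any x in X give a lower bound; taking
   x = x*_{gam1}(yb), the mismatch between gam and gam1 = (1 - c tau) gam produces the
   c-term of psi.  At the new iterate, convexity of f and of the quadratic penalty,
   together with Lg tau^2 <= bet1 gam1, control the primal part, while the yb-update is a
   gradient ascent step of length gam1 / Lg on the concave function g_{gam1}, whose gradient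
   A x*_{gam1} - b is (Lg / gam1)-Lipschitz.  The descent lemma then gives
   g(yb1) >= g(yh) + gam1 / (2 Lg) |A xs - b|^2, which absorbs the penalty overshoot.
   The descent lemma is proved without integration: the gradient inequality is summed
   along a uniform subdivision of the segment and the mesh is sent to zero. *)

From HB Require Import structures.
From mathcomp Require Import all_boot all_order all_algebra.
From mathcomp Require Import all_classical all_reals ereal.
From mathcomp Require Import ring lra.
Set Implicit Arguments. Unset Strict Implicit. Unset Printing Implicit Defensive.
Import Order.TTheory GRing.Theory Num.Theory.
Local Open Scope ring_scope.

Section InnerProduct.
Variables (R : realType) (k : nat).
Implicit Types (u v w : 'cV[R]_k) (a : R).

Lemma dotvC u v : dotv u v = dotv v u.
Proof. by apply: eq_bigr => i _; rewrite mulrC. Qed.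

Lemma dotvDl u v w : dotv (u + v) w = dotv u w + dotv v w.
Proof. by rewrite /dotv -big_split; apply: eq_bigr => i _; rewrite mxE mulrDl. Qed.

Lemma dotvZl a u w : dotv (a *: u) w = a * dotv u w.
Proof. by rewrite /dotv mulr_sumr; apply: eq_bigr => i _; rewrite mxE mulrA. Qed.

Lemma dotvNl u w : dotv (- u) w = - dotv u w.
Proof. by rewrite -scaleN1r dotvZl mulN1r. Qed.

Lemma dotvBl u v w : dotv (u - v) w = dotv u w - dotv v w.
Proof. by rewrite dotvDl dotvNl. Qed.

Lemma dotvDr u v w : dotv w (u + v) = dotv w u + dotv w v.
Proof. by rewrite dotvC dotvDl !(dotvC w). Qed.

Lemma dotvZr a u w : dotv w (a *: u) = a * dotv w u.
Proof. by rewrite dotvC dotvZl dotvC. Qed.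

Lemma dotvNr u w : dotv w (- u) = - dotv w u.
Proof. by rewrite dotvC dotvNl dotvC. Qed.

Lemma dotvBr u v w : dotv w (u - v) = dotv w u - dotv w v.
Proof. by rewrite dotvDr dotvNr. Qed.

Lemma dotvv_ge0 u : 0 <= dotv u u.
Proof. by apply: sumr_ge0 => i _; rewrite -expr2 sqr_ge0. Qed.

Lemma dotvv_eq0 u : dotv u u = 0 -> u = 0.
Proof.
move=> /psumr_eq0P u0; apply/matrixP => i j; rewrite ord1 mxE.
have /(_ i isT)/eqP := u0 (fun l _ => sqr_ge0 (u l ord0)).
by rewrite mulf_eq0 orbb => /eqP.
Qed.

Lemma norm2_ge0 u : 0 <= norm2 u.
Proof. exact: sqrtr_ge0. Qed.

Lemma sqr_norm2 u : norm2 u ^+ 2 = dotv u u.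
Proof. by rewrite sqr_sqrtr // dotvv_ge0. Qed.

Lemma norm2Z a u : norm2 (a *: u) = `|a| * norm2 u.
Proof. by rewrite /norm2 dotvZl dotvZr mulrA -expr2 sqrtrM ?sqr_ge0 // sqrtr_sqr. Qed.

Lemma dotv0l w : dotv 0 w = 0.
Proof. by rewrite -(scale0r 0) dotvZl mul0r. Qed.

Lemma dotv_ge_norm2 u v : - (norm2 u * norm2 v) <= dotv u v.
Proof.
have [u0|] := eqVneq (dotv u u) 0.
  by rewrite (dotvv_eq0 u0) dotv0l oppr_le0 mulr_ge0 ?norm2_ge0.
have [v0|] := eqVneq (dotv v v) 0.
  by rewrite dotvC (dotvv_eq0 v0) dotv0l oppr_le0 mulr_ge0 ?norm2_ge0.
rewrite -!sqr_norm2 !sqrf_eq0 => nv0 nu0.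
have nu : 0 < norm2 u by rewrite lt_def nu0 norm2_ge0.
have nv : 0 < norm2 v by rewrite lt_def nv0 norm2_ge0.
(* 0 <= | |v| u + |u| v |^2 = 2 |u| |v| (|u| |v| + <u, v>) *)
have := dotvv_ge0 (norm2 v *: u + norm2 u *: v).
rewrite !dotvDl !dotvDr !dotvZl !dotvZr -!sqr_norm2 (dotvC v u).
have : 0 < norm2 u * norm2 v by rewrite mulr_gt0.
nra.
Qed.

End InnerProduct.

Lemma dotv_trmx (R : realType) (m n : nat) (A : 'M[R]_(m, n)) (y : 'cV[R]_m) (z : 'cV[R]_n) :
  dotv (A^T *m y) z = dotv y (A *m z).
Proof.
have dotvE k (u v : 'cV[R]_k) : dotv u v = (u^T *m v) ord0 ord0.
  by rewrite !mxE; apply: eq_bigr => i _; rewrite !mxE.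
by rewrite !dotvE trmx_mul trmxK mulmxA.
Qed.

Lemma young_dotv (R : realType) (k : nat) (u y : 'cV[R]_k) (bet : R) : 0 < bet ->
  dotv u y - bet / 2 * dotv y y <= dotv u u / (2 * bet).
Proof.
move=> bet0; have := dotvv_ge0 (u - bet *: y).
rewrite !dotvBl !dotvBr !dotvZl !dotvZr (dotvC y u) ler_pdivlMr; last by lra.
nra.
Qed.

Section Gradient.
Variables (R : realType) (k : nat).
Implicit Types (u v w y z : 'cV[R]_k).

Lemma convex_grad_le (h : 'cV[R]_k -> R) u v gv :
  has_grad h v gv ->
  (forall t, 0 < t < 1 -> h (t *: u + (1 - t) *: v) <= t * h u + (1 - t) * h v) ->
  h v + dotv gv (u - v) <= h u.
Proof.
move=> hg hcvx; set w := u - v; set nw := norm2 w.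
have nw0 : 0 <= nw := norm2_ge0 w.
have slack e : 0 < e -> dotv gv w - e * nw <= h u - h v.
  move=> e0; have [d [d0 hd]] := hg e e0.
  set t := d / (d + nw + 1).
  have t0 : 0 < t by rewrite divr_gt0 //; lra.
  have t1 : t < 1 by rewrite ltr_pdivrMr ?mul1r; lra.
  have tnw : t * nw < d.
    rewrite /t mulrAC ltr_pdivrMr; last lra.
    by rewrite ltr_pM2l //; lra.
  have vtw : v + t *: w = t *: u + (1 - t) *: v.
    by apply/matrixP => i j; rewrite !mxE; ring.
  have := hd (v + t *: w); rewrite addrC addKr norm2Z gtr0_norm // => /(_ tnw).
  rewrite ler_norml dotvZr vtw -/nw => /andP[+ _].
  have := hcvx t; rewrite t0 t1 => /(_ isT) convex_t lin_t.
  rewrite -(ler_pM2l t0); lra.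
rewrite -lerBrDl; apply/ler_addgt0Pr => e e0.
have := slack (e / (nw + 1)) (divr_gt0 e0 (ltr_pwDr ltr01 nw0)).
have : e / (nw + 1) * nw <= e by rewrite mulrAC ler_pdivrMr; nra.
lra.
Qed.

Lemma has_gradN (g : 'cV[R]_k -> R) v gv :
  has_grad g v gv -> has_grad (fun x => - g x) v (- gv).
Proof.
move=> hg e e0; have [d [d0 hd]] := hg e e0; exists d; split => // u /hd.
by rewrite dotvNl -normrN; congr (`|_| <= _); ring.
Qed.

Lemma concave_grad_ge (g : 'cV[R]_k -> R) (G : 'cV[R]_k -> 'cV[R]_k) :
  concave_fun g -> (forall y, has_grad g y (G y)) ->
  forall z w, g w <= g z + dotv (G z) (w - z).
Proof.
move=> gcvx hg z w.
suff : - g z + dotv (- G z) (w - z) <= - g w by rewrite dotvNl; lra.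
apply: convex_grad_le (has_gradN (hg z)) _ => t /andP[t0 t1].
have := gcvx w z t; rewrite (ltW t0) (ltW t1) => /(_ isT); lra.
Qed.

Lemma bregman_ge0 (p : 'cV[R]_k -> R) gp sigma u v :
  0 <= sigma -> strongly_convex p sigma -> has_grad p v (gp v) ->
  0 <= bregman p gp u v.
Proof.
move=> sigma0 psc hgv.
suff : p v + dotv (gp v) (u - v) <= p u by rewrite /bregman; lra.
apply: convex_grad_le hgv _ => t /andP[t0 t1].
have := psc u v t; rewrite (ltW t0) (ltW t1) => /(_ isT).
have : 0 <= sigma / 2 * t * (1 - t) * norm2 (u - v) ^+ 2.
  by rewrite mulr_ge0 ?sqr_ge0 // !mulr_ge0 ?invr_ge0 //; lra.
lra.
Qed.

End Gradient.

Section Descent.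
Variables (R : realType) (k : nat) (g : 'cV[R]_k -> R) (G : 'cV[R]_k -> 'cV[R]_k) (L : R).
Hypotheses (L0 : 0 <= L) (gcvx : concave_fun g) (g_grad : forall y, has_grad g y (G y))
  (G_lip : forall y1 y2, norm2 (G y1 - G y2) <= L * norm2 (y1 - y2)).
Implicit Types (y d : 'cV[R]_k).

Lemma concave_lipschitz_incr y d a s : 0 <= a -> 0 <= s ->
  s * dotv (G y) d - L * s * (a + s) * dotv d d
    <= g (y + (a + s) *: d) - g (y + a *: d).
Proof.
move=> a0 s0; set z := y + (a + s) *: d.
have Gz : dotv (G y) d - L * (a + s) * dotv d d <= dotv (G z) d.
  have zy : z - y = (a + s) *: d by rewrite addrC addKr.
  have := G_lip z y; rewrite zy norm2Z ger0_norm ?addr_ge0 // => lip.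
  have := ler_wpM2r (norm2_ge0 d) lip; rewrite -!mulrA -expr2 sqr_norm2.
  have := dotv_ge_norm2 (G z - G y) d; rewrite dotvBl; lra.
have := concave_grad_ge gcvx g_grad z (y + a *: d).
have -> : y + a *: d - z = (- s) *: d by apply/matrixP => i j; rewrite !mxE; ring.
rewrite dotvZr; nra.
Qed.

Lemma concave_lipschitz_riemann y d (N : nat) :
  g y + dotv (G y) d - L / 2 * dotv d d - L * dotv d d / (2 * N.+1%:R) <= g (y + d).
Proof.
set s : R := N.+1%:R^-1; have s0 : 0 <= s by rewrite invr_ge0.
have partial (j : nat) : j%:R * s * dotv (G y) d
    - L * s ^+ 2 * (j%:R * (j%:R + 1) / 2) * dotv d d <= g (y + (j%:R * s) *: d) - g y.
  elim: j => [|j IH]; first by rewrite !mul0r scale0r addr0 subrr mulr0 mul0r subr0.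
  have := concave_lipschitz_incr y d (mulr_ge0 (ler0n _ j) s0) s0.
  rewrite -[j.+1]addn1 natrD mulrDl mul1r; lra.
have := partial N.+1; rewrite mulfV ?pnatr_eq0 // scale1r mul1r.
have -> : L * s ^+ 2 * (N.+1%:R * (N.+1%:R + 1) / 2) * dotv d d
    = L / 2 * dotv d d + L * dotv d d / (2 * N.+1%:R).
  by rewrite /s; field; rewrite nat1r pnatr_eq0.
(* lra does not treat the inverse of [2 * N.+1%:R] as an atom *)
set r := L * dotv d d / _; lra.
Qed.

Lemma concave_lipschitz_descent y d :
  g y + dotv (G y) d - L / 2 * dotv d d <= g (y + d).
Proof.
apply/ler_addgt0Pr => e e0.
set K := L * dotv d d; have K0 : 0 <= K by rewrite mulr_ge0 ?dotvv_ge0.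
have [N KN] : exists N : nat, K / (2 * e) < N.+1%:R.
  exists (Num.bound (K / (2 * e))); apply: (lt_le_trans (archi_boundP _)).
    by rewrite divr_ge0 // mulr_ge0 // ltW.
  by rewrite ler_nat.
have := concave_lipschitz_riemann y d N; rewrite -/K.
move: KN; set M : R := N.+1%:R; have M0 : 0 < M by rewrite ltr0n.
rewrite ltr_pdivrMr ?mulr_gt0 // => KN.
have : K / (2 * M) <= e by rewrite ler_pdivrMr ?mulr_gt0 //; lra.
set r := K / _; lra.
Qed.

Lemma concave_lipschitz_gradient_step y : 0 < L ->
  g y + dotv (G y) (G y) / (2 * L) <= g (y + L^-1 *: G y).
Proof.
move=> Lpos; have := concave_lipschitz_descent y (L^-1 *: G y).
rewrite dotvZr !dotvZl dotvZr.
have -> : L / 2 * (L^-1 * (L^-1 * dotv (G y) (G y))) = dotv (G y) (G y) / (2 * L).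
  by field; rewrite gt_eqF.
have -> : L^-1 * dotv (G y) (G y) = 2 * (dotv (G y) (G y) / (2 * L)).
  by field; rewrite gt_eqF.
lra.
Qed.

End Descent.

Lemma penalty_convex_step (R : realType) (k : nat) (u r : 'cV[R]_k) (t bet gam L : R) :
  0 < t < 1 -> 0 < bet -> 0 < L -> L * t ^+ 2 <= (1 - t) * bet * gam ->
  dotv ((1 - t) *: u + t *: r) ((1 - t) *: u + t *: r) / (2 * ((1 - t) * bet))
    <= (1 - t) * (dotv u u / (2 * bet)) + t / bet * dotv u r + gam / (2 * L) * dotv r r.
Proof.
move=> /andP[t0 t1] bet0 L0 tL.
rewrite !dotvDl !dotvDr !dotvZl !dotvZr (dotvC r u).
have -> : ((1 - t) * ((1 - t) * dotv u u) + (1 - t) * (t * dotv u r)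
    + (t * ((1 - t) * dotv u r) + t * (t * dotv r r))) / (2 * ((1 - t) * bet))
    = (1 - t) * (dotv u u / (2 * bet)) + t / bet * dotv u r
      + t ^+ 2 / ((1 - t) * bet) / 2 * dotv r r.
  by field; rewrite !gt_eqF //; lra.
have : t ^+ 2 / ((1 - t) * bet) <= gam / L.
  by rewrite ler_pdivrMr ?mulr_gt0 ?subr_gt0 // mulrAC ler_pdivlMr //; lra.
have -> : gam / (2 * L) = gam / L / 2 by field; rewrite gt_eqF.
move: (t ^+ 2 / _) (gam / L) (dotvv_ge0 r) => T a r0 Ta.
rewrite lerD2l; nra.
Qed.

Section SmoothedGap.
Variables (R : realType) (n m q : nat) (f : 'cV[R]_n -> \bar R) (X : 'cV[R]_n -> Prop)
  (A : 'M[R]_(m, n)) (b : 'cV[R]_m) (p : 'cV[R]_q -> R) (gp : 'cV[R]_q -> 'cV[R]_q)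
  (S : 'M[R]_(q, n)) (xc : 'cV[R]_n).
Local Notation smobj := (smobj f A b p gp S xc).
Local Notation gsmooth := (gsmooth f X A b p gp S xc).
Local Notation gap := (gap f X A b p gp S xc).
Local Notation dS x := (bregman p gp (S *m x) (S *m xc)).

Lemma gsmooth_le gam y x : X x -> (gsmooth gam y <= smobj gam y x)%E.
Proof. by move=> Xx; apply: ereal_inf_lbound; exists x. Qed.

Lemma gsmooth_minimizer gam y xs :
  is_smoothed_minimizer f X A b p gp S xc gam y xs -> gsmooth gam y = smobj gam y xs.
Proof.
move=> [Xxs xs_min]; apply/eqP; rewrite eq_le gsmooth_le //=.
by apply: le_ereal_inf_tmp => _ [x [Xx ->]]; apply: xs_min.
Qed.

Lemma minimizer_fin_num gam y xs :
  is_smoothed_minimizer f X A b p gp S xc gam y xs ->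
  gsmooth gam y \is a fin_num -> f xs \is a fin_num.
Proof. by move/gsmooth_minimizer => ->; rewrite fin_numD => /andP[]. Qed.

Lemma gsmooth_minimizer_fine gam y xs :
  is_smoothed_minimizer f X A b p gp S xc gam y xs -> gsmooth gam y \is a fin_num ->
  fine (gsmooth gam y) = fine (f xs) + (dotv y (A *m xs - b) + gam * dS xs).
Proof.
move=> xs_min g_fin; rewrite (gsmooth_minimizer xs_min) /smobj.
by have /fineK <- := minimizer_fin_num xs_min g_fin.
Qed.

Lemma smoothed_dual_ascent xstar Lg gam y :
  0 < Lg -> 0 < gam -> smoothable f X A b p gp S xc xstar Lg ->
  fine (gsmooth gam y) + gam / (2 * Lg) * dotv (A *m xstar gam y - b) (A *m xstar gam y - b)
    <= fine (gsmooth gam (y + (gam / Lg) *: (A *m xstar gam y - b))).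
Proof.
move=> Lg0 gam0 /(_ gam gam0) /= [_ [g_cvx [g_grad g_lip]]].
have L0 : 0 < Lg / gam by rewrite divr_gt0.
have := concave_lipschitz_gradient_step (ltW L0) g_cvx g_grad g_lip y L0.
have -> : forall r, r / (2 * (Lg / gam)) = gam / (2 * Lg) * r.
  by move=> r; field; rewrite !gt_eqF.
by rewrite invf_div; apply.
Qed.

Lemma residual_convex_comb t x z :
  A *m ((1 - t) *: x + t *: z) - b = (1 - t) *: (A *m x - b) + t *: (A *m z - b).
Proof. by rewrite mulmxDr -!scalemxAr; apply/matrixP => i j; rewrite !mxE; ring. Qed.

Lemma dotv_gap_coupling xb x yb y :
  dotv (A^T *m yb) (xb - x) + dotv (b - A *m xb) (yb - y)
    = dotv (A *m xb - b) y - dotv yb (A *m x - b).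
Proof.
rewrite dotv_trmx (_ : A *m (xb - x) = (A *m xb - b) - (A *m x - b)); last first.
  by rewrite mulmxBr; apply/matrixP => i j; rewrite !mxE; ring.
rewrite (_ : b - A *m xb = - (A *m xb - b)); last by rewrite opprB.
move: (A *m xb - b) (A *m x - b) => u r.
rewrite dotvNl !dotvBr (dotvC yb); ring.
Qed.

Lemma gap_ge gam bet xb yb x : 0 < bet -> X x ->
  (f xb - f x + (dotv (A *m xb - b) (A *m xb - b) / (2 * bet)
     - dotv yb (A *m x - b) - gam * dS x)%:E <= gap gam bet xb yb)%E.
Proof.
move=> bet0 Xx; set u := A *m xb - b.
apply: le_trans (ereal_sup_ubound _); last by exists x, (bet^-1 *: u).
apply: leeD => //; rewrite lee_fin dotv_gap_coupling -/u sqr_norm2 dotvZr !dotvZl dotvZr.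
have -> : bet / 2 * (bet^-1 * (bet^-1 * dotv u u)) = dotv u u / (2 * bet).
  by field; rewrite gt_eqF.
have -> : bet^-1 * dotv u u = 2 * (dotv u u / (2 * bet)) by field; rewrite gt_eqF.
lra.
Qed.

Lemma gap_le gam bet xb yb : 0 < bet -> (forall x, (-oo < f x)%E) ->
  gsmooth gam yb \is a fin_num ->
  (gap gam bet xb yb <= f xb + (dotv (A *m xb - b) (A *m xb - b) / (2 * bet)
                                 - fine (gsmooth gam yb))%:E)%E.
Proof.
move=> bet0 f_gtNy g_fin; set u := A *m xb - b.
case Efb: (f xb) => [Fb| |]; last by have := f_gtNy xb; rewrite Efb.
  apply: ge_ereal_sup => _ [x [y [Xx ->]]]; rewrite Efb.
  case Efx: (f x) => [Fx| |]; last by have := f_gtNy x; rewrite Efx.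
    have g_le := gsmooth_le gam yb Xx.
    rewrite -(fineK g_fin) /smobj Efx -EFinD lee_fin in g_le.
    rewrite -EFinB -EFinD lee_fin dotv_gap_coupling -/u sqr_norm2.
    have := young_dotv u y bet0; lra.
  by rewrite addeNy addNye leNye.
by rewrite addye ?leey.
Qed.

End SmoothedGap.

Theorem lemma4p2 (R : realType) (n m q : nat)
  (f : 'cV[R]_n -> \bar R) (X : 'cV[R]_n -> Prop)
  (A : 'M[R]_(m, n)) (b : 'cV[R]_m)
  (p : 'cV[R]_q -> R) (gp : 'cV[R]_q -> 'cV[R]_q) (sigma : R)
  (S : 'M[R]_(q, n)) (xc : 'cV[R]_n)
  (xstar : R -> 'cV[R]_m -> 'cV[R]_n) (Lg : R) :
  proper_fun f -> closed_fun f -> convex_fun f ->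
  (exists x, X x) -> closed_set X -> convex_set X ->
  (exists xs, primal_solution f X A b xs) ->
  (polytope X \/ exists x, A *m x = b /\ relint X x) ->
  0 < sigma -> (forall v, has_grad p v (gp v)) -> strongly_convex p sigma ->
  X xc ->
  (forall (gam : R) (y : 'cV[R]_m), 0 < gam ->
     is_smoothed_minimizer f X A b p gp S xc gam y (xstar gam y)) ->
  0 < Lg -> smoothable f X A b p gp S xc xstar Lg ->
  forall (xb : 'cV[R]_n) (yb : 'cV[R]_m) (gam bet tau c : R),
  X xb -> 0 < gam -> 0 < bet -> 0 < tau < 1 -> -1 < c <= 1 ->
  let bet1 := (1 - tau) * bet in
  let gam1 := (1 - c * tau) * gam in
  let yh := (1 - tau) *: yb + (tau / bet) *: (A *m xb - b) in
  let xs := xstar gam1 yh in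
  let xb1 := (1 - tau) *: xb + tau *: xs in
  let yb1 := yh + (gam1 / Lg) *: (A *m xs - b) in
  let psi := tau * (1 - tau) * gam *
       (bregman p gp (S *m xs) (S *m xc)
        - c * bregman p gp (S *m xstar gam1 yb) (S *m xc)) in
  Lg * tau ^+ 2 <= bet1 * gam1 ->
  X xb1 /\
  (gap f X A b p gp S xc gam1 bet1 xb1 yb1
     <= (1 - tau)%:E * gap f X A b p gp S xc gam bet xb yb - psi%:E)%E.

Proof.
move=> f_prop _ f_cvx _ _ X_cvx _ _ sigma0 p_grad p_sc _ xmin Lg0 g_smooth
  xb yb gam bet tau c Xxb gam0 bet0 tau01 /andP[c_gt c_le1]
  bet1 gam1 yh xs xb1 yb1 psi tau_step.
have /andP[tau0 tau1] := tau01.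
have gam1_0 : 0 < gam1 by rewrite mulr_gt0 //; nra.
have bet1_0 : 0 < bet1 by rewrite mulr_gt0 // subr_gt0.
set x1 := xstar gam1 yb.
have [Xxs _] := xmin gam1 yh gam1_0; have [Xx1 x1_min] := xmin gam1 yb gam1_0.
split; first by have := X_cvx xb xs (1 - tau); rewrite subKr; apply => //; lra.
have g_fin y : gsmooth f X A b p gp S xc gam1 y \is a fin_num := (g_smooth gam1 gam1_0).1 y.
have /fineK fxs := minimizer_fin_num (xmin gam1 yh gam1_0) (g_fin yh).
have /fineK fx1 := minimizer_fin_num (xmin gam1 yb gam1_0) (g_fin yb).
have gap0_ge := gap_ge f A b p gp S xc gam xb yb bet0 Xx1.
case Efb: (f xb) => [Fb| |] in gap0_ge *; last first.
- by have := proj2 f_prop xb; rewrite Efb.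
- rewrite -fx1 -EFinN !addye // leye_eq in gap0_ge.
  by rewrite (eqP gap0_ge) gt0_muley ?lte_fin ?subr_gt0 // addye // leey.
set Fs := fine (f xs) in fxs *; set F1 := fine (f x1) in fx1 *.
rewrite -fx1 -EFinB -EFinD in gap0_ge.
have fxb1 : (f xb1 <= ((1 - tau) * Fb + tau * Fs)%:E)%E.
  have := f_cvx xb xs (1 - tau); rewrite subKr Efb -fxs -!EFinM -EFinD; apply; lra.
apply: le_trans (gap_le xb1 bet1_0 (proj2 f_prop) (g_fin yb1)) _.
apply: le_trans (leeD fxb1 (lexx _)) _.
apply: le_trans (leeB (lee_wpmul2l _ gap0_ge) (lexx _)); last first.
  by rewrite lee_fin subr_ge0 ltW.
rewrite -EFinD -EFinM -EFinB lee_fin /psi -/x1.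
set u := A *m xb - b; set rs := A *m xs - b; set r1 := A *m x1 - b; set u1 := A *m xb1 - b.
set dxs := bregman p gp (S *m xs) (S *m xc); set dx1 := bregman p gp (S *m x1) (S *m xc).
have ascent := smoothed_dual_ascent yh Lg0 gam1_0 g_smooth.
rewrite (gsmooth_minimizer_fine (xmin gam1 yh gam1_0)) // dotvDl !dotvZl in ascent.
rewrite -/xs -/rs -/u -/Fs -/dxs -/yb1 in ascent.
have x1_opt : (1 - tau) * (F1 + (dotv yb r1 + gam1 * dx1))
    <= (1 - tau) * (Fs + (dotv yb rs + gam1 * dxs)).
  have := x1_min xs Xxs; rewrite /smobj -fx1 -fxs -!EFinD lee_fin.
  by apply: ler_wpM2l; rewrite subr_ge0 ltW.
have penalty := penalty_convex_step u rs tau01 bet0 Lg0 tau_step.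
rewrite -residual_convex_comb -/xb1 -/u1 -/bet1 in penalty.
have dxs_ge0 : 0 <= dxs := bregman_ge0 _ (ltW sigma0) p_sc (p_grad _).
have gam_xs : tau * (1 - tau) * gam * dxs <= tau * gam1 * dxs.
  rewrite -subr_ge0 (_ : _ - _ = tau ^+ 2 * gam * (1 - c) * dxs); last by rewrite /gam1; ring.
  by rewrite !mulr_ge0 //; lra.
have gam_x1 : (1 - tau) * gam1 * dx1 = (1 - tau) * gam * dx1 - tau * (1 - tau) * gam * c * dx1.
  by rewrite /gam1; ring.
lra.
Qed.
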